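(* In the Mean-Var-BTS-RED setting, let $p=\frac1{4e\sqrt\pi}$ and let $S'_t=\{\boldsymbol x\in\mathcal X:\Delta(\boldsymbol x)>\omega c_t\sigma_{t-1}(\boldsymbol x)+(1-\omega)c'_t\sigma'_{t-1}(\boldsymbol x)\}$ with $\Delta(\boldsymbol x)=h(\boldsymbol x^*_\omega)-h(\boldsymbol x)$. For every $t\ge1$ and all histories $\mathcal F_{t-1},\mathcal F'_{t-1}$ on which both $E^f(t)$ and $E^g(t)$ hold, $$\mathbb P\big(\boldsymbol x^{(b)}_t\in\mathcal X\setminus S'_t\mid\mathcal F_{t-1},\mathcal F'_{t-1}\big)\ge p^2-1/t^2\qquad\text{for all }b\in[b_t].$$
   Context: Setting (Mean-Var-BTS-RED). $\mathcal X$ finite; $k,k'$ squared-exponential kernels on $\mathcal X$ (so $k(\boldsymbol x,\boldsymbol x)=k'(\boldsymbol x,\boldsymbol x)=1$). Unknown $f\in\mathcal H_k$ with $\|f\|_{\mathcal H_k}\le B$, unknown noise variance $\sigma^2:\mathcal X\to(0,\infty)$ with maximum $\sigma^2_{\max}$, and $g=-\sigma^2$ with $\|g\|_{\mathcal H_{k'}}\le B'$. Querying $\boldsymbol x$ returns $f(\boldsymbol x)+\epsilon$, $\epsilon\sim\mathcal N(0,\sigma^2(\boldsymbol x))$ independently. Horizon $T$, budget $\mathbb B\in\mathbb N$, $R^2>0$, weight $\omega\in[0,1]$, $\lambda=1+2/T$, $\delta\in(0,1)$, minimum replication $n_{\min}\ge2$. GP posterior formulas: from pairs $(\boldsymbol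 x_i,y_i)$, $\mu(\boldsymbol x)=\boldsymbol k(\boldsymbol x)^\top(\boldsymbol K+\lambda I)^{-1}\boldsymbol y$, $s^2(\boldsymbol x,\boldsymbol x')=k(\boldsymbol x,\boldsymbol x')-\boldsymbol k(\boldsymbol x)^\top(\boldsymbol K+\lambda I)^{-1}\boldsymbol k(\boldsymbol x')$. $\mu_{t-1},\sigma^2_{t-1}(\cdot,\cdot)$ (kernel $k$) use pairs $(\boldsymbol x^{(b)}_{t'},y^{(b)}_{t'})$ and $\mu'_{t-1},\sigma'^2_{t-1}(\cdot,\cdot)$ (kernel $k'$) use pairs $(\boldsymbol x^{(b)}_{t'},\widetilde y^{(b)}_{t'})$, $t'<t$; $\sigma_{t-1}(\boldsymbol x)$, $\sigma'_{t-1}(\boldsymbol x)$ are the posterior standard deviations. Algorithm: in iteration $t$, for $b=1,2,\dots$: independently sample $f^{(b)}_t\sim\mathcal{GP}(\mu_{t-1},\beta_t^2\sigma^2_{t-1})$ and $g^{(b)}_t\sim\mathcal{GP}(\mu'_{t-1},\beta_t'^2\sigma'^2_{t-1})$; set $\boldsymbol x^{(b)}_t\in\arg\max_{\boldsymbol x}[\omega f^{(b)}_t(\boldsymbol x)+(1-\omega)g^{(b)}_t(\boldsymbol x)]$ and $n^{(b)}_t=\max\{n_{\min},\lceil(-\mu'_{t-1}(\boldsymbol x^{(b)}_t)+\beta'_t\sigma'_{t-1}(\boldsymbol x^{(b)}_t))/R^2\rceil\}$; stop at the first $b$ with $\sum_{b'\le b}n^{(b')}_t\ge\mathbb B$ and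 set $b_t=b-1$. Each $\boldsymbol x^{(b)}_t$, $b\in[b_t]$, is queried $n^{(b)}_t$ times; $y^{(b)}_t$ is the empirical mean and $\widetilde y^{(b)}_t=-\frac1{n^{(b)}_t-1}\sum_n(y^{(b)}_{t,n}-y^{(b)}_t)^2$ the negated unbiased empirical variance. $\tau_{t-1}=\sum_{t'<t}b_{t'}$. $\Gamma_m$ ($\Gamma'_m$) is the maximum over $|A|\le m$ of $\frac12\log\det(I+\lambda^{-1}K_A)$ for $k$ ($k'$). $\beta_t=B+R\sqrt{2(\Gamma_{\tau_{t-1}}+1+\log(3/\delta))}$, $\beta'_t=B'+R'\sqrt{2(\Gamma'_{\tau_{t-1}}+1+\log(3/\delta))}$ for a constant $R'>0$, $c_t=\beta_t(1+\sqrt{2\log(2\mathbb B|\mathcal X|t^2)})$, $c'_t=\beta'_t(1+\sqrt{2\log(2\mathbb B|\mathcal X|t^2)})$. $h(\boldsymbol x)=\omega f(\boldsymbol x)+(1-\omega)g(\boldsymbol x)$, $\boldsymbol x^*_\omega\in\arg\max h$. $\mathcal F_{t-1}$ ($\mathcal F'_{t-1}$) is the history of observed (input, empirical mean) (resp. (input, empirical noise variance)) pairs up to iteration $t-1$. $E^f(t)$: $|\mu_{t-1}(\boldsymbol x)-f(\boldsymbol x)|\le\beta_t\sigma_{t-1}(\boldsymbol x)$ for all $\boldsymbol x$; $E^g(t)$: $|\mu'_{t-1}(\boldsymbol x)-g(\boldsymbol x)|\le\beta'_t\sigma'_{t-1}(\boldsymbol x)$ for all $\boldsymbol x$. *)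

From HB Require Import structures.
From mathcomp Require Import all_boot all_order all_algebra.
From mathcomp Require Import all_classical all_reals all_analysis.
From mathcomp Require Import normal_distribution.

Set Implicit Arguments.
Unset Strict Implicit.
Unset Printing Implicit Defensive.

Import Order.TTheory GRing.Theory Num.Theory.

Local Open Scope classical_set_scope.
Local Open Scope ring_scope.

Section Defs.
Context {R : realType}.

Definition se_kernel (X : Type) (dim : nat) (emb : X -> 'rV[R]_dim) (l : R)
  (x y : X) : R :=
  expR (- (\sum_(i < dim) (emb x 0 i - emb y 0 i) ^+ 2) / (2 * l ^+ 2)).

(* RKHS of a kernel k on a finite set X: span of the k(.,x); the RKHS norm of
   f = sum_x a_x k(.,x) is sqrt(a^T K a) (independent of the representation).
   [in_rkhs_ball k f B] means  f \in H_k  and  ||f||_{H_k} <= B. *)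
Definition in_rkhs_ball (X : finType) (k : X -> X -> R) (f : X -> R) (B : R) :
  Prop :=
  0 <= B /\
  exists a : X -> R, (forall y, f y = \sum_x a x * k y x) /\
     \sum_x \sum_y a x * a y * k x y <= B ^+ 2.

Section Posterior.
Variables (X : finType) (k : X -> X -> R) (lam : R).

Definition gram (D : seq (X * R)) : 'M[R]_(size D) :=
  \matrix_(i, j) k (tnth (in_tuple D) i).1 (tnth (in_tuple D) j).1.
Definition kvec (D : seq (X * R)) (x : X) : 'cV[R]_(size D) :=
  \col_i k (tnth (in_tuple D) i).1 x.
Definition yvec (D : seq (X * R)) : 'cV[R]_(size D) :=
  \col_i (tnth (in_tuple D) i).2.

Definition post_mean (D : seq (X * R)) (x : X) : R :=
  (((kvec D x)^T *m invmx (gram D + lam%:M)) *m yvec D) 0 0.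
Definition post_cov (D : seq (X * R)) (x x' : X) : R :=
  k x x' - (((kvec D x)^T *m invmx (gram D + lam%:M)) *m kvec D x') 0 0.
Definition post_sd (D : seq (X * R)) (x : X) : R := Num.sqrt (post_cov D x x).

(* maximum information gain Gamma_m: max over multisets (sequences) A of
   at most m inputs of 1/2 log det (I + lam^{-1} K_A) *)
Definition max_info_gain (m : nat) : R :=
  \big[Num.max/0]_(n < m.+1)
    \big[Num.max/0]_(s : {ffun 'I_n -> X})
       (ln (\det (1%:M + lam^-1 *: \matrix_(i, j) k (s i) (s j))) / 2).

End Posterior.

Section Prob.
Context {d : measure_display} {Omega : measurableType d}.
Variable P : probability Omega R.

Definition gauss_law (m v : R) : set R -> \bar R :=
  fun A => if v == 0 then \d_m A else normal_prob m (Num.sqrt v) A.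

Definition has_law (Y : Omega -> R) (mu : set R -> \bar R) : Prop :=
  measurable_fun setT Y /\
  forall A : set R, measurable A -> P (Y @^-1` A) = mu A.

(* F is a Gaussian random vector indexed by the finite set X with mean m and
   covariance C, i.e. F ~ GP(m, C) restricted to X: every linear combination
   sum_x a_x F(x) is N(sum a m, a^T C a). *)
Definition is_gauss_vec (X : finType) (F : Omega -> X -> R)
  (m : X -> R) (C : X -> X -> R) : Prop :=
  forall a : X -> R,
    has_law (fun w => \sum_x a x * F w x)
      (gauss_law (\sum_x a x * m x) (\sum_x \sum_y a x * a y * C x y)).

(* independence of the random vectors F and G (product rule on the
   generating pi-system of measurable rectangles) *)
Definition indep_vec (X : finType) (F G : Omega -> X -> R) : Prop :=
  forall A B : X -> set R,
    (forall x, measurable (A x)) -> (forall x, measurable (B x)) ->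
    P [set w | forall x, A x (F w x) /\ B x (G w x)] =
    (P [set w | forall x, A x (F w x)] * P [set w | forall x, B x (G w x)])%E.

End Prob.

Definition beta_par (B Rn Gam delta : R) : R :=
  B + Rn * Num.sqrt (2 * (Gam + 1 + ln (3 / delta))).
Definition c_par (beta : R) (Bud cardX t : nat) : R :=
  beta * (1 + Num.sqrt (2 * ln (2 * Bud%:R * cardX%:R * t%:R ^+ 2))).

End Defs.

From mathcomp Require Import all_boot all_order all_algebra.
From mathcomp Require Import all_classical all_reals all_analysis.
From mathcomp Require Import normal_distribution measurable_realfun.
From mathcomp Require Import ring lra.

Import Order.TTheory GRing.Theory Num.Theory.
Local Open Scope classical_set_scope.
Local Open Scope ring_scope.

(* Given the history, the Thompson samples [F ~ N(mu, beta^2 s^2)] and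
   [G ~ N(mu', beta'^2 s'^2)] are independent Gaussian vectors.  A Gaussian exceeds
   its mean by one standard deviation with probability at least [p = 1/(4 e sqrt pi)],
   so under [E^f(t)] and [E^g(t)] both samples at [x*] dominate the true values
   with probability at least [p^2].  By Gaussian tails and a union bound over [X],
   outside an event of probability [2 |X| exp (- c^2/2)] every sample lies below
   [mu + c beta s].  On the intersection, maximality of [x^(b)] for
   [omega F + (1 - omega) G] gives [Delta(x^(b)) <= omega c_t s + (1 - omega) c'_t s'].
   The choice [c = sqrt (2 log (2 B |X| t^2))] makes the union bound at most [1/t^2]. *)

Section normal_tails.
Context {R : realType}.
Implicit Types m s x a b c r : R.

Lemma normal_pdf_neq0 m s x :
  s != 0 -> normal_pdf m s x = normal_peak s * normal_fun m s x.
Proof. by move=> s0; rewrite normal_pdfE. Qed.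

Lemma normal_peakE s : 0 < s -> normal_peak s = (s * Num.sqrt (pi *+ 2))^-1.
Proof.
by move=> s0; rewrite /normal_peak -mulrnAr sqrtrM ?sqr_ge0// sqrtr_sqr gtr0_norm.
Qed.

Lemma normal_prob_itv_ge m s a b r : a <= b -> 0 <= r ->
  (forall x, a <= x <= b -> r <= normal_pdf m s x) ->
  (((b - a) * r)%:E <= normal_prob m s [set` `[a, b]])%E.
Proof.
move=> ab r0 pdf_ge.
apply: (@le_trans _ _ (\int[lebesgue_measure]_(x in [set` `[a, b]]) (cst r%:E x))%E).
  rewrite integral_cst/=; last exact: measurable_itv.
  rewrite lebesgue_measure_itv /= lte_fin.
  case: ltgtP ab => // [ab _|<- _]; first by rewrite -EFinD -EFinM mulrC.
  by rewrite subrr mul0r mule0.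
apply: ge0_le_integral => //.
- by apply/measurable_EFinP/measurable_funTS; exact: measurable_normal_pdf.
Qed.

Lemma normal_tail_const_le s : 0 < s ->
  (4 * expR 1 * Num.sqrt pi)^-1 <= s / 2 * (normal_peak s * expR (- (9 / 8))).
Proof.
move=> s0; rewrite normal_peakE//.
have pi0 : 0 < Num.sqrt pi :> R by rewrite sqrtr_gt0 pi_gt0.
have sqrt2_le : Num.sqrt 2 <= 7 / 4 :> R.
  rewrite -[X in _ <= X]ger0_norm ?divr_ge0// -sqrtr_sqr ler_sqrt; lra.
have sqrt2_gt0 : 0 < Num.sqrt 2 :> R by rewrite sqrtr_gt0.
(* [expR (- 9/8) = e^-1 expR (- 1/8)], and [2 expR (- 1/8) >= 7/4 >= sqrt 2]. *)
have exp_le : 7 / 8 <= expR (- (1 / 8)) :> R by apply: le_trans (expR_ge1Dx _); lra.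
rewrite (_ : - (9 / 8) = - 1 + - (1 / 8)); last by lra.
have -> : Num.sqrt (pi *+ 2) = Num.sqrt 2 * Num.sqrt pi :> R.
  by rewrite -sqrtrM// mulr_natl.
rewrite expRD expRN.
set e := expR 1; set u := expR (- (1 / 8)); set q := Num.sqrt 2.
have e0 : 0 < e by exact: expR_gt0.
rewrite (_ : s / 2 * ((s * (q * Num.sqrt pi))^-1 * (e^-1 * u)) =
             (4 * e * Num.sqrt pi)^-1 * (2 * u / q)); last by field; rewrite !gt_eqF.
rewrite -[leLHS]mulr1 ler_pM2l ?invr_gt0 ?mulr_gt0//.
by rewrite ler_pdivlMr// mul1r; move: exp_le sqrt2_le; rewrite -/u -/q; lra.
Qed.

(* The density on [[m + s, m + 3 s / 2]] is at least its value at the right end. *)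
Lemma normal_prob_sigma_tail_ge m s : 0 < s ->
  (((4 * expR 1 * Num.sqrt pi)^-1)%:E <= normal_prob m s [set y | (m + s <= y)%R])%E.
Proof.
move=> s0; set b := m + s * (3 / 2).
apply: (@le_trans _ _ (normal_prob m s [set` `[m + s, b]])); last first.
  apply: le_measure; rewrite ?inE; [exact: measurable_itv| |].
  + by rewrite -set_itvcy; exact: measurable_itv.
  + by move=> y /=; rewrite in_itv /= => /andP[].
apply: le_trans (_ : _ <= (s / 2 * (normal_peak s * expR (- (9 / 8))))%:E)%E _.
  by rewrite lee_fin normal_tail_const_le.
have -> : s / 2 = b - (m + s) by rewrite /b; field.
apply: normal_prob_itv_ge.
- by rewrite /b lerD2l ler_peMr ?ltW//; lra.
- by rewrite mulr_ge0 ?normal_peak_ge0 ?expR_ge0.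
- move=> x /andP[sx xb]; rewrite normal_pdf_neq0 ?gt_eqF// ler_wpM2l ?normal_peak_ge0//.
  rewrite ler_expR mulNr lerN2 ler_pdivrMr ?pmulrn_lgt0 ?exprn_gt0//.
  have xm_ge0 : 0 <= x - m by rewrite subr_ge0 (le_trans _ sx)// lerDl ltW.
  have xm_le : x - m <= s * (3 / 2) by rewrite lerBlDl.
  by rewrite mulr2n; nra.
Qed.

Lemma normal_pdf_shift_le m s c x : 0 < s -> 0 <= c -> m + s * c <= x ->
  normal_pdf m s x <= expR (- c ^+ 2 / 2) * normal_pdf (m + s * c) s x.
Proof.
move=> s0 c0 xsc; rewrite !normal_pdf_neq0 ?gt_eqF// mulrCA.
rewrite ler_wpM2l ?normal_peak_ge0// /normal_fun -expRD ler_expR -subr_ge0.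
have den0 : 0 < s ^+ 2 *+ 2 by rewrite pmulrn_lgt0// exprn_gt0.
(* completing the square: the difference of exponents is [2 (x - m - s c) s c / (2 s^2)] *)
have -> : - c ^+ 2 / 2 + - (x - (m + s * c)) ^+ 2 / (s ^+ 2 *+ 2) -
    - (x - m) ^+ 2 / (s ^+ 2 *+ 2) = 2 * (x - (m + s * c)) * (s * c) / (s ^+ 2 *+ 2).
  by rewrite mulr2n; field; rewrite gt_eqF.
apply: divr_ge0 (ltW den0); rewrite -subr_ge0 in xsc.
by apply: mulr_ge0; [exact: mulr_ge0 | exact: mulr_ge0 (ltW s0) c0].
Qed.

Lemma normal_prob_tail_le m s c : 0 < s -> 0 <= c ->
  (normal_prob m s [set y | (m + s * c < y)%R] <= (expR (- c ^+ 2 / 2))%:E)%E.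
Proof.
move=> s0 c0; set A := [set y | m + s * c < y].
have mA : measurable A by rewrite /A -set_itvoy; exact: measurable_itv.
apply: (@le_trans _ _ (\int[lebesgue_measure]_(x in A)
   ((expR (- c ^+ 2 / 2))%:E * (normal_pdf (m + s * c) s x)%:E))%E).
  apply: ge0_le_integral => //.
  - by move=> x _; rewrite lee_fin normal_pdf_ge0.
  - by apply/measurable_EFinP/measurable_funTS; exact: measurable_normal_pdf.
  - apply/measurable_funTS/measurable_EFinP => /=.
    by apply: measurable_funM => //; exact: measurable_normal_pdf.
  - move=> x xA; rewrite -EFinM lee_fin.
    exact: normal_pdf_shift_le s0 c0 (ltW xA).
rewrite ge0_integralZl_EFin//; last 2 first.
- by move=> x _; rewrite lee_fin normal_pdf_ge0.
- by apply/measurable_EFinP/measurable_funTS; exact: measurable_normal_pdf.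
rewrite -[leRHS]mule1; apply: lee_pmul => //.
- by apply: integral_ge0 => x _; rewrite lee_fin normal_pdf_ge0.
- exact: (probability_le1 (normal_prob (m + s * c) s) mA).
Qed.

(* For [s = 0] the library's [normal_prob m s] is the junk uniform law on [[0, 1]]. *)
Lemma normal_prob0_itv m a : 0 <= a <= 1 -> normal_prob m 0 [set` `[0, a]] = a%:E.
Proof.
move=> /andP[a0 a1].
have ia : [set` `[0, 1]] `&` [set` `[0, a]] = [set` `[0, a]] :> set R.
  apply/setIidr => y /=; rewrite !in_itv /= => /andP[-> ya].
  exact: le_trans a1.
rewrite /normal_prob /normal_pdf eqxx integral_indic ?ia; [|exact: measurable_itv..].
apply: eq_trans (lebesgue_measure_itv _) _; rewrite /= lte_fin.
by case: ltgtP a0 => // [_ _|<- _]; rewrite ?sube0.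
Qed.
End normal_tails.

Section gauss_law.
Context {R : realType} {d : measure_display} {Omega : measurableType d}.
Context {P : probability Omega R}.
Implicit Types (Y : Omega -> R) (m v c : R).

Lemma has_law_measurable_preimage Y mu A :
  has_law P Y mu -> measurable A -> measurable (Y @^-1` A).
Proof. by move=> [mY _] mA; rewrite -[_ @^-1` _]setTI; exact: mY. Qed.

Lemma has_law_measurable_ge {Y mu} a : has_law P Y mu -> measurable [set w | a <= Y w].
Proof.
move=> lawY; rewrite -[X in measurable X]/(Y @^-1` [set y | a <= y]) -set_itvcy.
exact: has_law_measurable_preimage lawY (measurable_itv _).
Qed.

Lemma has_law_measurable_gt {Y mu} a : has_law P Y mu -> measurable [set w | a < Y w].
Proof.
move=> lawY; rewrite -[X in measurable X]/(Y @^-1` [set y | a < y]) -set_itvoy.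
exact: has_law_measurable_preimage lawY (measurable_itv _).
Qed.

(* A negative variance gives the junk law of [normal_prob0_itv], which is not
   compatible with the law of [2 * Y]: it would put mass [1] on [[0, 1]]
   while [Y] puts mass [1/2] on [[0, 1/2]]. *)
Lemma gauss_law_var_ge0 Y m v :
  has_law P Y (gauss_law m v) ->
  has_law P (fun w => 2 * Y w) (gauss_law (2 * m) (2 * 2 * v)) -> 0 <= v.
Proof.
move=> [_ lawY] [_ law2Y]; rewrite leNgt; apply/negP => v_lt0.
have v4_lt0 : 2 * 2 * v < 0 by rewrite pmulr_rlt0.
have sqrt0 (u : R) : u < 0 -> Num.sqrt u = 0 by move=> /ltW; rewrite -sqrtr_eq0 => /eqP.
have := law2Y _ (measurable_itv (`[0, 1] : interval R)).
have := lawY _ (measurable_itv (`[0, 1 / 2] : interval R)).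
have itv1 : 0 <= (1 : R) <= 1 by rewrite ler01 lexx.
have itv12 : 0 <= (1 / 2 : R) <= 1 by apply/andP; split; lra.
rewrite /gauss_law (lt_eqF v_lt0) (lt_eqF v4_lt0) !sqrt0//.
rewrite (normal_prob0_itv _ _ itv1) (normal_prob0_itv _ _ itv12).
have -> : (fun w => 2 * Y w) @^-1` [set` `[0, 1]] = Y @^-1` [set` `[0, 1 / 2]].
  by apply/seteqP; split => w /=; rewrite !in_itv /= => /andP[? ?];
    apply/andP; split; lra.
by move=> -> [] /eqP; rewrite -subr_eq0 => /eqP; lra.
Qed.

Lemma gauss_law_tail_ge Y m v th :
  has_law P Y (gauss_law m v) -> 0 <= v -> th <= m + Num.sqrt v ->
  (((4 * expR 1 * Num.sqrt pi)^-1)%:E <= P [set w | (th <= Y w)%R])%E.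
Proof.
move=> [_ lawY] v_ge0 th_le.
rewrite -[X in P X]/(Y @^-1` [set y | th <= y]) lawY; last first.
  by rewrite -set_itvcy; exact: measurable_itv.
rewrite /gauss_law; have [v0|v_neq0] := eqVneq v 0.
  rewrite diracE mem_set; last by move: th_le; rewrite v0 sqrtr0 addr0.
  (* [p <= 1], as a lower bound on a probability *)
  apply: le_trans (normal_prob_sigma_tail_ge 0 1 ltr01) (probability_le1 _ _).
  by rewrite -set_itvcy; exact: measurable_itv.
have sqrtv_gt0 : 0 < Num.sqrt v by rewrite sqrtr_gt0 lt_def v_neq0.
apply: le_trans (normal_prob_sigma_tail_ge m _ sqrtv_gt0) _.
apply: le_measure; rewrite ?inE; try by rewrite -set_itvcy; exact: measurable_itv.
by move=> y /=; exact: le_trans.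
Qed.

Lemma gauss_law_tail_le Y m v c :
  has_law P Y (gauss_law m v) -> 0 <= v -> 0 <= c ->
  (P [set w | (m + Num.sqrt v * c < Y w)%R] <= (expR (- c ^+ 2 / 2))%:E)%E.
Proof.
move=> [_ lawY] v_ge0 c_ge0.
rewrite -[X in P X]/(Y @^-1` [set y | m + Num.sqrt v * c < y]) lawY; last first.
  by rewrite -set_itvoy; exact: measurable_itv.
rewrite /gauss_law; have [v0|v_neq0] := eqVneq v 0.
  rewrite diracE memNset ?lee_fin ?expR_ge0//.
  by rewrite /= v0 sqrtr0 mul0r addr0 ltxx.
by apply: normal_prob_tail_le c_ge0; rewrite sqrtr_gt0 lt_def v_neq0.
Qed.

End gauss_law.

Lemma measure_fin_bigcup_le {d : measure_display} {T : measurableType d} {R : realType}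
    (mu : {measure set T -> \bar R}) {X : finType} (A : X -> set T) :
  (forall x, measurable (A x)) -> (mu (\bigcup_x A x) <= \sum_x mu (A x))%E.
Proof.
move=> mA; have -> : \bigcup_x A x = \big[setU/set0]_x A x.
  rewrite -big_enum -bigcup_seq; congr bigcup.
  by apply/seteqP; split => x //= _; rewrite mem_enum.
pose Q (B : set T) (b : \bar R) := measurable B /\ (mu B <= b)%E.
suff [] : Q (\big[setU/set0]_x A x) (\sum_x mu (A x)) by [].
apply: big_ind2 => [|B b B' b' [mB Bb] [mB' Bb']|x _].
- by split; rewrite ?measure0.
- split; first exact: measurableU.
  exact: le_trans (measureU2 _ mB mB') (leeD Bb Bb').
- by split; rewrite ?mA.
Qed.

Lemma sum_if_eq_mulr {R : pzSemiRingType} {X : finType} (x : X) (c : R) (G : X -> R) :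
  \sum_y (if y == x then c else 0) * G y = c * G x.
Proof. by rewrite (bigD1 x)//= eqxx big1 ?addr0// => y /negbTE ->; rewrite mul0r. Qed.

Section gauss_vec.
Context {R : realType} {d : measure_display} {Omega : measurableType d}.
Context {P : probability Omega R} {X : finType}.
Context {F : Omega -> X -> R} {m : X -> R} {C : X -> X -> R}.
Hypothesis gaussF : is_gauss_vec P F m C.

Lemma is_gauss_vec_scaled_coord (c : R) x :
  has_law P (fun w => c * F w x) (gauss_law (c * m x) (c * c * C x x)).
Proof.
have := gaussF (fun y => if y == x then c else 0).
rewrite sum_if_eq_mulr.
under eq_bigr do under eq_bigr do rewrite -mulrA.
under eq_bigr do rewrite -mulr_sumr sum_if_eq_mulr.
rewrite (sum_if_eq_mulr _ _ (fun y => c * C y x)) mulrA.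
by under eq_fun do rewrite sum_if_eq_mulr.
Qed.

Lemma is_gauss_vec_coord x : has_law P (fun w => F w x) (gauss_law (m x) (C x x)).
Proof.
have := is_gauss_vec_scaled_coord 1 x; rewrite !mul1r.
by under eq_fun do rewrite mul1r.
Qed.

Lemma is_gauss_vec_var_ge0 x : 0 <= C x x.
Proof.
exact: gauss_law_var_ge0 (is_gauss_vec_coord x) (is_gauss_vec_scaled_coord 2 x).
Qed.

End gauss_vec.

Lemma scalarized_gap_le {R : realFieldType} (om fs gs fz gz Fs Gs Fz Gz bf bg : R) :
  0 <= om <= 1 -> fs <= Fs -> gs <= Gs -> Fz <= fz + bf -> Gz <= gz + bg ->
  om * Fs + (1 - om) * Gs <= om * Fz + (1 - om) * Gz ->
  (om * fs + (1 - om) * gs) - (om * fz + (1 - om) * gz) <= om * bf + (1 - om) * bg.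
Proof.
move=> /andP[om0 om1] fsF gsG Ffb Ggb Fmax; have om1' : 0 <= 1 - om by lra.
have := ler_wpM2l om0 fsF; have := ler_wpM2l om1' gsG.
have := ler_wpM2l om0 Ffb; have := ler_wpM2l om1' Ggb.
lra.
Qed.

Section thompson_sampling.
Context {R : realType} {d : measure_display} {Omega : measurableType d}.
Context {P : probability Omega R} {X : finType}.
Context {F G : Omega -> X -> R} {mu mu' : X -> R} {C C' : X -> X -> R}.
Hypotheses (gaussF : is_gauss_vec P F mu C) (gaussG : is_gauss_vec P G mu' C').
Hypothesis indepFG : indep_vec P F G.

Local Notation p := (4 * expR 1 * Num.sqrt pi)^-1.

Lemma prob_both_tails_ge x (a b : R) :
  a <= mu x + Num.sqrt (C x x) -> b <= mu' x + Num.sqrt (C' x x) ->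
  ((p ^+ 2)%:E <= P [set w | (a <= F w x)%R /\ (b <= G w x)%R])%E.
Proof.
(* [indep_vec] speaks of rectangles: the event at [x] is the rectangle that is
   trivial off [x]. *)
move=> a_le b_le; pose tail (c : R) y := if y == x then [set r | c <= r] else setT.
have mtail c y : measurable (tail c y).
  by rewrite /tail; case: eqP => _ //; rewrite -set_itvcy; exact: measurable_itv.
have tailE (H : Omega -> X -> R) c :
    [set w | forall y, tail c y (H w y)] = [set w | c <= H w x].
  apply/seteqP; split => w /=; first by move/(_ x); rewrite /tail eqxx.
  by move=> cH y; rewrite /tail; case: eqP => [->|].
have -> : [set w | a <= F w x /\ b <= G w x] =
    [set w | forall y, tail a y (F w y) /\ tail b y (G w y)].
  apply/seteqP; split => w /=.
    by move=> [aF bG] y; rewrite /tail; case: eqP => [->|].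
  by move/(_ x); rewrite /tail eqxx.
rewrite indepFG// !tailE expr2 EFinM; apply: lee_pmul; rewrite ?lee_fin ?invr_ge0//.
- exact: gauss_law_tail_ge (is_gauss_vec_coord gaussF x) (is_gauss_vec_var_ge0 gaussF x) a_le.
- exact: gauss_law_tail_ge (is_gauss_vec_coord gaussG x) (is_gauss_vec_var_ge0 gaussG x) b_le.
Qed.

Definition ucb_violation (c : R) : set Omega :=
  \bigcup_x ([set w | mu x + Num.sqrt (C x x) * c < F w x] `|`
             [set w | mu' x + Num.sqrt (C' x x) * c < G w x]).

Lemma measurable_ucb_violation c : measurable (ucb_violation c).
Proof.
apply: fin_bigcup_measurable => [|x _]; first exact: finite_finset.
apply: measurableU.
- exact: has_law_measurable_gt (is_gauss_vec_coord gaussF x).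
- exact: has_law_measurable_gt (is_gauss_vec_coord gaussG x).
Qed.

Lemma prob_ucb_violation_le c : 0 <= c ->
  (P (ucb_violation c) <= (#|X|%:R * (2 * expR (- c ^+ 2 / 2)))%:E)%E.
Proof.
move=> c_ge0; have mF x a := has_law_measurable_gt a (is_gauss_vec_coord gaussF x).
have mG x a := has_law_measurable_gt a (is_gauss_vec_coord gaussG x).
rewrite /ucb_violation.
apply: le_trans (measure_fin_bigcup_le P _ (fun x => measurableU _ _ (mF x _) (mG x _))) _.
have -> : (#|X|%:R * (2 * expR (- c ^+ 2 / 2)))%:E =
    (\sum_(x : X) (2 * expR (- c ^+ 2 / 2))%:E)%E by rewrite sumEFin sumr_const mulr_natl.
apply: lee_sum => x _.
apply: le_trans (measureU2 _ (mF x _) (mG x _)) _.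
rewrite mulr_natl mulr2n EFinD; apply: leeD.
- exact: gauss_law_tail_le (is_gauss_vec_coord gaussF x) (is_gauss_vec_var_ge0 gaussF x) c_ge0.
- exact: gauss_law_tail_le (is_gauss_vec_coord gaussG x) (is_gauss_vec_var_ge0 gaussG x) c_ge0.
Qed.

Context {om : R} {xs : Omega -> X}.
Hypothesis om01 : 0 <= om <= 1.
Hypothesis xs_argmax : forall w x,
  om * F w x + (1 - om) * G w x <= om * F w (xs w) + (1 - om) * G w (xs w).
Hypothesis xs_measurable : forall x, measurable [set w | xs w = x].

Definition scalarize (f g : X -> R) x := om * f x + (1 - om) * g x.

Lemma measurable_xs_preimage (Q : set X) : measurable [set w | Q (xs w)].
Proof.
have -> : [set w | Q (xs w)] = \bigcup_(x in Q) [set w | xs w = x].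
  by apply/seteqP; split => [w Qw|w [x Qx /= ->//]]; exists (xs w).
by apply: fin_bigcup_measurable => [|x _]; [exact: finite_finset | exact: xs_measurable].
Qed.

(* The saturated set [S'_t] of the paper, with [c_t = beta_t (1 + c)] and
   [sqrt (C x x) = beta_t sigma_{t-1}(x)]. *)
Definition saturated (f g : X -> R) xstar c : set X :=
  [set z | om * ((1 + c) * Num.sqrt (C z z)) + (1 - om) * ((1 + c) * Num.sqrt (C' z z))
           < scalarize f g xstar - scalarize f g z].

Lemma thompson_gap_prob_ge (f g : X -> R) xstar c : 0 <= c ->
  (forall x, `|mu x - f x| <= Num.sqrt (C x x)) ->
  (forall x, `|mu' x - g x| <= Num.sqrt (C' x x)) ->
  ((p ^+ 2 - #|X|%:R * (2 * expR (- c ^+ 2 / 2)))%:E <=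
   P [set w | ~ saturated f g xstar c (xs w)])%E.
Proof.
move=> c_ge0 Ef Eg; set E := [set w | _].
pose good := [set w | f xstar <= F w xstar /\ g xstar <= G w xstar].
have good_ge : ((p ^+ 2)%:E <= P good)%E.
  apply: prob_both_tails_ge.
  - by have := Ef xstar; rewrite ler_norml => /andP[? _]; lra.
  - by have := Eg xstar; rewrite ler_norml => /andP[? _]; lra.
have good_sub : good `<=` E `|` ucb_violation c.
  move=> w [fF gG]; have [|noviol] := pselect (ucb_violation c w); [by right|left].
  set z := xs w; have [Fz Gz] : F w z <= mu z + Num.sqrt (C z z) * c /\
                                G w z <= mu' z + Num.sqrt (C' z z) * c.
    by split; rewrite leNgt; apply/negP => viol; apply: noviol; exists z => //; [left|right].
  apply/negP; rewrite -leNgt.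
  apply: scalarized_gap_le fF gG _ _ (xs_argmax w xstar) => //.
  - by have := Ef z; rewrite ler_norml => /andP[_ ?]; lra.
  - by have := Eg z; rewrite ler_norml => /andP[_ ?]; lra.
have mgood : measurable good.
  apply: measurableI.
  - exact: has_law_measurable_ge (is_gauss_vec_coord gaussF xstar).
  - exact: has_law_measurable_ge (is_gauss_vec_coord gaussG xstar).
have mE : measurable E := measurable_xs_preimage (~` saturated f g xstar c).
have mviol := measurable_ucb_violation c.
rewrite EFinB leeBlDr//; apply: le_trans good_ge _.
have := le_measure P (mem_set mgood) (mem_set (measurableU _ _ mE mviol)) good_sub.
move/le_trans; apply; apply: le_trans (measureU2 _ mE mviol) _.
exact/leeD2l/prob_ucb_violation_le.
Qed.

End thompson_sampling.

Lemma beta_par_ge0 {R : realType} (B Rn Gam delta : R) :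
  0 <= B -> 0 <= Rn -> 0 <= beta_par B Rn Gam delta.
Proof. by move=> B0 Rn0; rewrite addr_ge0// mulr_ge0// sqrtr_ge0. Qed.

Lemma sqrtr_sqrM {R : rcfType} (a c : R) : 0 <= a -> Num.sqrt (a ^+ 2 * c) = a * Num.sqrt c.
Proof. by move=> a0; rewrite sqrtrM ?sqr_ge0// sqrtr_sqr ger0_norm. Qed.

(* The left-hand side equals [1 / (Bud t^2)]. *)
Lemma union_bound_calibration_le {R : realType} (Bud n t : nat) :
  (0 < Bud)%N -> (0 < n)%N -> (0 < t)%N ->
  n%:R * (2 * expR (- Num.sqrt (2 * ln (2 * Bud%:R * n%:R * t%:R ^+ 2)) ^+ 2 / 2))
    <= (t%:R ^+ 2)^-1 :> R.
Proof.
move=> Bud0 n0 t0; set N : R := 2 * Bud%:R * n%:R * t%:R ^+ 2.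
have Bud1 : 1 <= Bud%:R :> R by rewrite ler1n.
have N1 : 1 <= N by rewrite /N !mulr_ege1 ?ler1n ?expr_ge1//; lra.
rewrite sqr_sqrtr ?mulr_ge0 ?ln_ge0//.
rewrite (_ : - (2 * ln N) / 2 = - ln N); last by field.
rewrite expRN lnK ?posrE ?(lt_le_trans ltr01)//.
have tt0 : 0 < t%:R ^+ 2 :> R by rewrite exprn_gt0// ltr0n.
rewrite (_ : n%:R * (2 * N^-1) = (Bud%:R * t%:R ^+ 2)^-1); last first.
  by rewrite /N; field; rewrite !gt_eqF ?ltr0n.
by rewrite lef_pV2 ?posrE ?mulr_gt0 ?ltr0n// ler_peMl// ltW.
Qed.

Theorem mainTheorem14
  (R : realType) (X : finType) (dim : nat) (emb : X -> 'rV[R]_dim)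
  (emb_inj : injective emb) (l l' : R) (hl : 0 < l) (hl' : 0 < l')
  (f sigma2 : X -> R) (B B' Rn Rn' omega delta : R)
  (T Bud nmin t : nat) (H : seq (X * R * R)) (xstar : X)
  (d : measure_display) (Omega : measurableType d) (P : probability Omega R)
  (fs gs : nat -> Omega -> X -> R) (xs : nat -> Omega -> X) :
  let k := se_kernel emb l in
  let k' := se_kernel emb l' in
  let g := fun x => - sigma2 x in
  let lam := 1 + 2 / T%:R in
  (* history: (input, empirical mean, negated empirical variance) triples *)
  let Hf := [seq (z.1.1, z.1.2) | z <- H] in
  let Hg := [seq (z.1.1, z.2) | z <- H] in
  let tau := size H in
  let beta := beta_par B Rn (max_info_gain k lam tau) delta in
  let beta' := beta_par B' Rn' (max_info_gain k' lam tau) delta in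
  let ct := c_par beta Bud #|X| t in
  let ct' := c_par beta' Bud #|X| t in
  let mu := post_mean k lam Hf in
  let sd := post_sd k lam Hf in
  let mu' := post_mean k' lam Hg in
  let sd' := post_sd k' lam Hg in
  let h := fun x => omega * f x + (1 - omega) * g x in
  let S' := [set x | h xstar - h x > omega * ct * sd x + (1 - omega) * ct' * sd' x] in
  let p := (4 * expR 1 * Num.sqrt pi)^-1 in
  in_rkhs_ball k f B ->
  (forall x, 0 < sigma2 x) ->
  in_rkhs_ball k' g B' ->
  (0 < T)%N -> (0 < Bud)%N -> 0 < Rn -> 0 < Rn' ->
  0 <= omega <= 1 -> 0 < delta < 1 -> (2 <= nmin)%N ->
  (1 <= t)%N ->
  (forall x, h x <= h xstar) ->
  (* E^f(t) and E^g(t) hold on the given history *)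
  (forall x, `|mu x - f x| <= beta * sd x) ->
  (forall x, `|mu' x - g x| <= beta' * sd' x) ->
  (* the b-th Thompson samples f^(b) ~ GP(mu, beta^2 s^2), g^(b) ~ GP(mu', beta'^2 s'^2),
     independent, and x^(b) a (measurable) maximiser of omega f^(b) + (1-omega) g^(b) *)
  (forall b, is_gauss_vec P (fs b) mu (fun x y => beta ^+ 2 * post_cov k lam Hf x y)) ->
  (forall b, is_gauss_vec P (gs b) mu' (fun x y => beta' ^+ 2 * post_cov k' lam Hg x y)) ->
  (forall b, indep_vec P (fs b) (gs b)) ->
  (forall b w x, omega * fs b w x + (1 - omega) * gs b w x
                 <= omega * fs b w (xs b w) + (1 - omega) * gs b w (xs b w)) ->
  (forall b x, measurable [set w | xs b w = x]) ->
  forall b, (1 <= b)%N ->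
    ((p ^+ 2 - (t%:R ^+ 2)^-1)%:E <= P [set w | ~ S' (xs b w)])%E.
Proof.
move=> k k' g lam Hf Hg tau beta beta' ct ct' mu sd mu' sd' h S' p.
move=> [B0 _] _ [B'0 _] _ Bud0 Rn0 Rn'0 om01 _ _ t1 _ Ef Eg gaussF gaussG indepFG
  xs_argmax xs_measurable b _.
have beta0 : 0 <= beta by rewrite /beta beta_par_ge0// ltW.
have beta'0 : 0 <= beta' by rewrite /beta' beta_par_ge0// ltW.
have sdE x : Num.sqrt (beta ^+ 2 * post_cov k lam Hf x x) = beta * sd x.
  exact: sqrtr_sqrM _ _ beta0.
have sdE' x : Num.sqrt (beta' ^+ 2 * post_cov k' lam Hg x x) = beta' * sd' x.
  exact: sqrtr_sqrM _ _ beta'0.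
pose c : R := Num.sqrt (2 * ln (2 * Bud%:R * #|X|%:R * t%:R ^+ 2)).
have Ef' x : `|mu x - f x| <= Num.sqrt (beta ^+ 2 * post_cov k lam Hf x x).
  by rewrite sdE.
have Eg' x : `|mu' x - g x| <= Num.sqrt (beta' ^+ 2 * post_cov k' lam Hg x x).
  by rewrite sdE'.
have X0 : (0 < #|X|)%N by apply/card_gt0P; exists xstar.
apply: le_trans (_ : _ <= (p ^+ 2 - #|X|%:R * (2 * expR (- c ^+ 2 / 2)))%:E)%E _.
  by rewrite lee_fin lerD2l lerN2 union_bound_calibration_le.
apply: le_trans (thompson_gap_prob_ge (gaussF b) (gaussG b) (indepFG b) om01 (xs_argmax b)
  (xs_measurable b) f g xstar c (sqrtr_ge0 _) Ef' Eg') _.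
rewrite le_eqVlt; apply: predU1l; congr (P _); apply: eq_set => w; congr (~ _).
rewrite /saturated /scalarize /S' /h; congr (_ (xs b w)); apply: eq_set => z.
have ctE : ct = beta * (1 + c) := erefl.
have ct'E : ct' = beta' * (1 + c) := erefl.
by rewrite (sdE z) (sdE' z) ctE ct'E; congr (_ < _); ring.
Qed.
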